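(* If $x,y\in X$ satisfy $\deg(x)=i$ and $\deg(y)=i+1$ for some positive integer $i$, then the pair $x,y$ is not asymptotic, i.e. $\limsup_{n\to\infty}d(T^n(x),T^n(y))>0$.
   Context: Paths and cycles: a graph is $G=(V,E)$ with $V$ finite and $E\subset V\times V$. A path is a finite sequence of vertices $(u_0,\dots,u_L)$ with $(u_j,u_{j+1})\in E$; its length is $|\cdot|=L$; a cycle is a path with $u_0=u_L$. For paths where one ends where the next starts, $+$ denotes concatenation and $a\,c$ means the cycle $c$ traversed $a$ times. Construction: $G_0=(V_0,E_0)$ with $V_0=\{v_{0,0}\}$, $E_0=\{e_{0,0}\}$, $e_{0,0}=(v_{0,0},v_{0,0})$. For $n\geq1$, $G_n=(V_n,E_n)$ consists of a vertex $v_{n,0}$, the loop $e_{n,0}=(v_{n,0},v_{n,0})$, and $n$ cycles $c_{n,1},\dots,c_{n,n}$, each starting and ending at $v_{n,0}$, whose vertices other than $v_{n,0}$ are pairwise distinct (within each cycle and across cycles); $V_n$ is the set of all these vertices and $E_n$ consists of $e_{n,0}$ and the edges of the cycles. The maps $\varphi_n\colon V_{n+1}\to V_n$ and the lengths of the cycles $c_{n+1,i}$ are defined together: $\varphi_n(v_{n+1,0})=v_{n,0}$, and for each $i$ a path $P_{n,i}$ in $G_n$ from $v_{n,0}$ to $v_{n,0}$ is given; $c_{n+1,i}$ has length $|P_{n,i}|$ and $\varphi_n$ maps its $j$-th vertex to the $j$-th vertex of $P_{n,i}$ (written $\varphi_n(c_{n+1,i})=P_{n,i}$). The paths are: $P_{0,1}=10\,e_{0,0}$;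 for $n\geq1$: $P_{n,i}=e_{n,0}+2c_{n,i}+2c_{n,i+1}+\dots+2c_{n,n}+e_{n,0}$ for $2\leq i\leq n$; $P_{n,n+1}=(n+2)^2\big(\sum_{i=1}^n|c_{n,i}|\big)\,e_{n,0}$; and $P_{n,1}=(1\,e_{n,0}+2c_{n,1})+(2\,e_{n,0}+2c_{n,1})+\dots+(k_n\,e_{n,0}+2c_{n,1})+e_{n,0}+2c_{n,2}+\dots+2c_{n,n}+e_{n,0}$, where $k_n=2\big(1+\sum_{i=1}^n|c_{n,i}|\big)$. Let $X=\{x\in\prod_{n\geq0}V_n:\varphi_n(x_{n+1})=x_n\ \forall n\}$ with metric $d(x,y)=2^{-\min\{i:x_i\neq y_i\}}$ ($d(x,x)=0$); $X$ is a compact zero-dimensional metric space, and $T\colon X\to X$ defined by $T(x)=y$ iff $(x_n,y_n)\in E_n$ for all $n$ is a well-defined homeomorphism. Write $x_n$ for the $n$-th coordinate of $x$. Degree: for $v\in V_n$, $\deg(v)=+\infty$ if $v=v_{n,0}$ and $\deg(v)=i$ if $v$ is a vertex of $c_{n,i}$ different from $v_{n,0}$; for $x\in X$, $\deg(x)=\min_n\deg(x_n)$. *)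

From HB Require Import structures.
From mathcomp Require Import all_boot all_order all_algebra.
From Stdlib Require Import ClassicalEpsilon.
Set Implicit Arguments. Unset Strict Implicit. Unset Printing Implicit Defensive.
Import Order.TTheory GRing.Theory Num.Theory.

(* Vertices of G_n are encoded as pairs of naturals:
   (0,0)  is the base vertex v_{n,0};
   (i,j)  with 1 <= i <= n, 1 <= j < |c_{n,i}|  is the j-th vertex of c_{n,i}. *)
Definition V := (nat * nat)%type.
Definition center : V := (0%N, 0%N).

(* A closed path (u_0,...,u_L) based at the base vertex is encoded by the word
   [u_0; ...; u_{L-1}] (u_L is the base vertex); concatenation of closed paths
   is then list concatenation and the length is [size]. *)

(* word of the cycle c_{n,k} given the list ls = [|c_{n,1}|; ...; |c_{n,n}|] *)
Definition cyc_word (ls : seq nat) (k : nat) : seq V :=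
  [seq (if j == 0%N then center else (k, j)) | j <- iota 0 (nth 0%N ls k.-1)].

Definition Pword (n : nat) (ls : seq nat) (i : nat) : seq V :=
  let e := [:: center] in
  let twoc k := cyc_word ls k ++ cyc_word ls k in
  if n == 0%N then nseq 10 center
  else if i == n.+1 then nseq ((n + 2) ^ 2 * sumn ls) center
  else if i == 1%N then
    let kn := 2 * (1 + sumn ls) in
    flatten [seq nseq j center ++ twoc 1%N | j <- iota 1 kn]
      ++ e ++ flatten [seq twoc k | k <- iota 2 (n - 1)] ++ e
  else e ++ flatten [seq twoc k | k <- iota i (n - i + 1)] ++ e.

(* lens n = [|c_{n,1}|; ...; |c_{n,n}|],  with |c_{n+1,i}| = |P_{n,i}| *)
Fixpoint lens (n : nat) : seq nat :=
  match n with
  | 0 => [::]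
  | n'.+1 => [seq size (Pword n' (lens n') i) | i <- iota 1 n'.+1]
  end.

Definition Lcyc (n i : nat) : nat := nth 0%N (lens n) i.-1.

Definition inV (n : nat) (v : V) : bool :=
  (v == center) || ((0 < v.1 <= n) && (0 < v.2 < Lcyc n v.1))%N.

Definition cv (n i j : nat) : V :=
  if (j == 0%N) || (j == Lcyc n i) then center else (i, j).

Definition edge (n : nat) (u w : V) : bool :=
  ((u == center) && (w == center)) ||
  has (fun i => has (fun j => (u == cv n i j) && (w == cv n i j.+1))
                    (iota 0 (Lcyc n i))) (iota 1 n).

Definition phi (n : nat) (v : V) : V :=
  if v == center then center else nth center (Pword n (lens n) v.1) v.2.

Definition inX (x : nat -> V) : Prop :=
  forall n, inV n (x n) /\ phi n (x n.+1) = x n.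

Definition Trel (x y : nat -> V) : Prop := forall n, edge n (x n) (y n).

Definition is_orbit (x : nat -> V) (xs : nat -> nat -> V) : Prop :=
  xs 0%N = x /\ forall k, inX (xs k) /\ Trel (xs k) (xs k.+1).

(* degree of a vertex: None = +infinity *)
Definition vdeg (v : V) : option nat := if v == center then None else Some v.1.

Definition has_deg (x : nat -> V) (i : nat) : Prop :=
  (exists n, vdeg (x n) = Some i) /\
  (forall n m, vdeg (x n) = Some m -> (i <= m)%N).

Definition dist (x y : nat -> V) : rat :=
  match excluded_middle_informative (exists i, (fun k => x k != y k) i) with
  | left H => ((2%:R : rat) ^+ (ex_minn H))^-1
  | right _ => 0%R
  end.

From HB Require Import structures.
From mathcomp Require Import all_boot all_order all_algebra.
From mathcomp Require Import zify.
From Stdlib Require Import Classical ClassicalEpsilon.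
Set Implicit Arguments. Unset Strict Implicit. Unset Printing Implicit Defensive.
Import Order.TTheory GRing.Theory Num.Theory.

(* Eventually [x_m] lies on the cycle [c_{m,i}] and [y_m] on [c_{m,i+1}].  The paths
   [P_{m,i}] and [P_{m,i+1}] share a suffix, so after a delay [d] both points run over the
   same vertices of [G_m]; if [x_N] and [y_N] agreed from time [K] on, [t |-> y_N(t)]
   would be [d]-periodic on a long time interval.  The shared suffix ends with
   [2 c_{m,m} + e_{m,0}], which is much longer than [d] and lies over the base vertex
   of [G_N], so periodicity forces [y_N(0)] to be the base vertex, contradicting
   [deg y = i + 1].  The delay is small unless [x] still has to run once more around
   [c_{m,i}] before reaching the shared suffix; but then [x_N] visits [c_{N,i}], while
   [y_N] never has degree less than [i + 1]. *)

Definition deg_ge (j : nat) (v : V) : bool := (v == center) || (j <= v.1).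
Definition on_cycle (k : nat) (v : V) : bool := (v == center) || (v.1 == k).

Definition cyc_word2 (ls : seq nat) (k : nat) : seq V := cyc_word ls k ++ cyc_word ls k.

Lemma size_cyc_word ls k : size (cyc_word ls k) = nth 0 ls k.-1.
Proof. by rewrite size_map size_iota. Qed.

Lemma size_cyc_word2 ls k : size (cyc_word2 ls k) = 2 * nth 0 ls k.-1.
Proof. by rewrite size_cat size_cyc_word addnn -mul2n. Qed.

Lemma nth_cyc_word ls k s : s < nth 0 ls k.-1 ->
  nth center (cyc_word ls k) s = if s == 0 then center else (k, s).
Proof. by move=> hs; rewrite (nth_map 0) ?size_iota // nth_iota. Qed.

Lemma cyc_word_on ls k : all (on_cycle k) (cyc_word ls k).
Proof. by apply/allP=> v /mapP [j _ ->]; rewrite /on_cycle; case: ifP; rewrite //= eqxx orbT. Qed.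

Lemma cyc_word2_center_on ls k :
  all (on_cycle k) (cyc_word2 ls k ++ [:: center]).
Proof. by rewrite !all_cat /= andbT !cyc_word_on. Qed.

Lemma Pword_mid n ls i : n != 0 -> i != n.+1 -> i != 1 ->
  Pword n ls i = center :: flatten [seq cyc_word2 ls k | k <- iota i (n - i + 1)] ++ [:: center].
Proof. by move=> n0 i_top i1; rewrite /Pword (negbTE n0) (negbTE i_top) (negbTE i1). Qed.

Lemma Pword_first n ls : n != 0 ->
  Pword n ls 1 =
    flatten [seq nseq j center ++ cyc_word2 ls 1 | j <- iota 1 (2 * (1 + sumn ls))]
      ++ center :: flatten [seq cyc_word2 ls k | k <- iota 2 (n - 1)] ++ [:: center].
Proof. by case: n. Qed.

Lemma Pword_top n ls : n != 0 -> Pword n ls n.+1 = nseq ((n + 2) ^ 2 * sumn ls) center.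
Proof. by move=> n0; rewrite /Pword (negbTE n0) eqxx. Qed.

Lemma Pword_deg_ge n ls j : 2 <= j -> all (deg_ge j) (Pword n ls j).
Proof.
move=> hj.
have nseq_on m : all (deg_ge j) (nseq m center).
  by apply/allP=> v /nseqP [-> _]; rewrite /deg_ge eqxx.
have [->|n0] := eqVneq n 0; first exact: nseq_on.
have [jt|j_top] := eqVneq j n.+1; first by rewrite [in Pword _ _ j]jt Pword_top // nseq_on.
rewrite Pword_mid //; last by apply/eqP=> j1; rewrite j1 in hj.
rewrite /= all_cat /= andbT; apply/allP=> v /flattenP [w /mapP [k]].
rewrite mem_iota => /andP [jk _] -> vw.
have : on_cycle k v by move: vw; rewrite mem_cat => /orP [] /(allP (cyc_word_on ls k)).
by rewrite /deg_ge /on_cycle => /orP [->//|/eqP ->]; rewrite jk orbT.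
Qed.

Lemma Pword_tail n ls j : 1 < n -> 0 < j <= n ->
  exists X, Pword n ls j = X ++ cyc_word2 ls n ++ [:: center].
Proof.
move=> hn /andP [h1 h2].
have [->|j1] := eqVneq j 1.
- rewrite Pword_first; last by apply/eqP; lia.
  rewrite (_ : n - 1 = (n - 2) + 1); last lia.
  rewrite iotaD map_cat flatten_cat (_ : 2 + (n - 2) = n); last lia.
  exists (flatten [seq nseq j center ++ cyc_word2 ls 1 | j <- iota 1 (2 * (1 + sumn ls))]
            ++ center :: flatten [seq cyc_word2 ls k | k <- iota 2 (n - 2)]).
  by rewrite /= cats0 -!catA.
- rewrite Pword_mid; try (apply/eqP; lia).
  rewrite iotaD map_cat flatten_cat (_ : j + (n - j) = n); last lia.
  exists (center :: flatten [seq cyc_word2 ls k | k <- iota j (n - j)]).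
  by rewrite /= cats0 -!catA.
Qed.

Lemma size_Pword_ge n ls j : 1 < n -> 0 < j <= n -> 2 * nth 0 ls n.-1 <= size (Pword n ls j).
Proof.
move=> hn hj; have [X ->] := Pword_tail ls hn hj.
by rewrite !size_cat !size_cyc_word; lia.
Qed.

Lemma Pword_head n ls j : 1 <= j <= n ->
  exists rest, Pword n ls j = center :: cyc_word ls j ++ rest.
Proof.
move=> /andP [h1 h2].
have [->|j1] := eqVneq j 1.
- rewrite Pword_first; last by apply/eqP; lia.
  rewrite (_ : 2 * (1 + sumn ls) = (1 + sumn ls).*2.+1.-1); last lia.
  by eexists; rewrite /= /cyc_word2 -!catA.
- rewrite Pword_mid; try (apply/eqP; lia).
  rewrite (_ : n - j + 1 = (n - j).+1); last lia.
  by eexists; rewrite /= /cyc_word2 -!catA.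
Qed.

Lemma sumn_nth_iota_le ls a c : sumn [seq nth 0 ls k | k <- iota a c] <= sumn ls.
Proof.
have shift h (s : seq nat) b d :
    [seq nth 0 (h :: s) k | k <- iota b.+1 d] = [seq nth 0 s k | k <- iota b d].
  by elim: d b => //= d IH b; rewrite IH.
elim: ls a c => [|h t IH] a c.
- by elim: c a => //= c IH a; rewrite nth_nil /= IH.
- case: a => [|a]; last by rewrite shift /=; have := IH a c; lia.
  by case: c => [//|c] /=; rewrite shift; have := IH 0 c; lia.
Qed.

Lemma nth_le_sumn ls k : nth 0 ls k <= sumn ls.
Proof. by have := sumn_nth_iota_le ls k 1; rewrite /= addn0. Qed.

Lemma size_Pword_le n ls j : 2 <= j <= n -> size (Pword n ls j) <= 2 + 2 * sumn ls.
Proof.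
move=> /andP [h1 h2].
have size_flat s : size (flatten [seq cyc_word2 ls k | k <- s])
                   = 2 * sumn [seq nth 0 ls k.-1 | k <- s].
  by elim: s => //= k s IH; rewrite size_cat IH size_cyc_word2; lia.
rewrite Pword_mid; try (apply/eqP; lia).
rewrite /= size_cat size_flat /= (_ : j = j.-1.+1); last lia.
have pred_iota a c : [seq nth 0 ls k.-1 | k <- iota a.+1 c] = [seq nth 0 ls k | k <- iota a c].
  by elim: c a => //= c IH a; rewrite IH.
rewrite pred_iota; have := sumn_nth_iota_le ls j.-1 (n - j.-1.+1 + 1); lia.
Qed.

(* Whenever [A] reads the vertex [(i, p')] of a cycle of length [L], it goes on to the end
   of that cycle, and then either ends (up to one base vertex) or runs around the whole
   cycle again. *)
Definition ends_or_repeats (i L : nat) (A : seq V) : Prop :=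
  forall p p', p < size A -> nth center A p = (i, p') ->
    p + (L - p') <= size A /\
    (size A - p <= L - p' + 1 \/
     forall s, 0 < s < L -> exists2 P, p + (L - p') <= P < size A & nth center A P = (i, s)).

Section Blocks.
Variables (i L : nat) (cw : seq V).
Hypothesis i_gt0 : 0 < i.
Hypothesis size_cw : size cw = L.
Hypothesis nth_cw : forall s, s < L -> nth center cw s = if s == 0 then center else (i, s).

Definition block j := nseq j center ++ cw ++ cw.

Lemma size_block j : size (block j) = j + L + L.
Proof. by rewrite !size_cat size_nseq size_cw addnA. Qed.

Lemma nth_block j p : p < j + L + L ->
  nth center (block j) p = if p < j then center
      else if p < j + L then nth center cw (p - j) else nth center cw (p - j - L).
Proof.
move=> hp; rewrite nth_cat size_nseq.
case: ltnP => h1; first by rewrite nth_nseq h1.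
by rewrite nth_cat size_cw; case: ltnP => h2; case: ltnP => h3 //; lia.
Qed.

Lemma nth_cw_eq s p' : s < L -> nth center cw s = (i, p') -> s = p' /\ 0 < s.
Proof.
move=> hs; rewrite nth_cw //; case: eqP => [_ /(congr1 fst) /= ei|s0 [<-]].
  by move: i_gt0; rewrite -ei.
by split; last lia.
Qed.

Lemma nth_block_snd j s : 0 < s < L -> nth center (block j) (j + L + s) = (i, s).
Proof.
move=> hs; rewrite nth_block; last lia.
rewrite ifF; last lia; rewrite ifF; last lia.
by rewrite (_ : j + L + s - j - L = s) ?nth_cw; [case: eqP => //; lia | lia | lia].
Qed.

Lemma nth_block_fst j s : 0 < s < L -> nth center (block j) (j + s) = (i, s).
Proof.
move=> hs; rewrite nth_block; last lia.
rewrite ifF; last lia; rewrite ifT; last lia.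
by rewrite (_ : j + s - j = s) ?nth_cw; [case: eqP => //; lia | lia | lia].
Qed.

Definition blocks js := flatten [seq block j | j <- js].

(* Reading the cycle in the first copy of a block, the second copy is a later complete
   traversal; reading it in the second copy, the next block (if any) starts another one. *)
Lemma blocks_ends_or_repeats js p p' :
  p < size (blocks js) -> nth center (blocks js) p = (i, p') ->
  p + (L - p') <= size (blocks js) /\
  (size (blocks js) - p <= L - p' \/
   forall s, 0 < s < L ->
     exists2 P, p + (L - p') <= P < size (blocks js) & nth center (blocks js) P = (i, s)).
Proof.
elim: js p => [//|j js IH] p.
rewrite -[blocks _]/(block j ++ blocks js) size_cat size_block nth_cat size_block.
set F := blocks js in IH * => hp.
case: (ltnP p (j + L + L)) => hpb; last first.
  move=> /(IH (p - (j + L + L)) (ltac:(lia))) [h1 h2]; split; first lia.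
  case: h2 => [h2|h2]; [left; lia | right=> s /h2 [P hP1 hP2]].
  exists (j + L + L + P); first lia.
  rewrite nth_cat size_block ifF; last lia.
  by rewrite (_ : j + L + L + P - (j + L + L) = P) //; lia.
rewrite nth_block //.
case: ltnP => h1; first by move=> /(congr1 fst) /= ei; move: i_gt0; rewrite -ei.
case: ltnP => h2 /nth_cw_eq [|e1 e2]; try lia.
- split; first lia.
  right=> s hs; exists (j + L + s); first lia.
  by rewrite nth_cat size_block ifT ?nth_block_snd //; lia.
- split; first lia.
  move: hp; rewrite /F; clear IH F; case: js => [|j2 js] hp; first by left; rewrite /= in hp *; lia.
  rewrite -[blocks _]/(block j2 ++ blocks js) in hp *.
  right=> s hs; exists (j + L + L + (j2 + s)); first by rewrite size_cat size_block; lia.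
  rewrite nth_cat size_block ifF; last lia.
  rewrite (_ : j + L + L + (j2 + s) - (j + L + L) = j2 + s); last lia.
  by rewrite nth_cat size_block ifT ?nth_block_fst //; lia.
Qed.

Lemma blocks_center_ends_or_repeats js (E : seq V) :
  E = [::] \/ E = [:: center] ->
  ends_or_repeats i L (blocks js ++ E).
Proof.
move=> hE p p'; have hE1 : size E <= 1 by case: hE => ->.
have := @blocks_ends_or_repeats js p p'; move: (blocks js) => F blocksF.
rewrite size_cat nth_cat; case: (ltnP p (size F)) => hpF hp.
- move=> /(blocksF hpF) [h1 h2]; split; first lia.
  case: h2 => [h2|h2]; [left; lia | right=> s /h2 [P hP1 hP2]].
  by exists P; [lia | rewrite nth_cat ifT //; lia].
- case: hE => hE; subst E; rewrite /= in hp *; first lia.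
  rewrite (_ : p - size F = 0); last lia.
  by move=> /(congr1 fst) /= ei; move: i_gt0; rewrite -ei.
Qed.
End Blocks.

(* [A] is a concatenation of blocks [j e_{n,0} + 2 c_{n,i}], possibly followed by [e_{n,0}]. *)
Lemma Pword_split n ls i : 0 < i < n ->
  exists A R, Pword n ls i = A ++ R /\ Pword n ls i.+1 = center :: R /\
   ends_or_repeats i (nth 0 ls i.-1) A /\ (1 < i -> size A = 1 + 2 * nth 0 ls i.-1).
Proof.
move=> /andP [hi hn].
have n0 : n != 0 by apply/eqP=> n0; rewrite n0 in hn.
have blocks_ok := blocks_center_ends_or_repeats hi (size_cyc_word ls i) (@nth_cyc_word ls i).
have [ei|i1] := eqVneq i 1; first subst i.
- exists (blocks (cyc_word ls 1) (iota 1 (2 * (1 + sumn ls))) ++ [:: center]).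
  exists (flatten [seq cyc_word2 ls k | k <- iota 2 (n - 1)] ++ [:: center]).
  split; first by rewrite Pword_first // -catA.
  split; last by split=> //; apply: blocks_ok; right.
  rewrite Pword_mid; try (apply/eqP; lia).
  by rewrite (_ : n - 2 + 1 = n - 1) //; lia.
- exists (blocks (cyc_word ls i) [:: 1] ++ [::]).
  exists (flatten [seq cyc_word2 ls k | k <- iota i.+1 (n - i)] ++ [:: center]).
  split.
    rewrite Pword_mid; try (apply/eqP; lia).
    rewrite (_ : n - i + 1 = (n - i).+1); last lia.
    by rewrite /= /block /cyc_word2 /= !cats0 -!catA.
  split.
    rewrite Pword_mid; try (apply/eqP; lia).
    by rewrite (_ : n - i.+1 + 1 = n - i) //; lia.
  split; first by apply: blocks_ok; left.
  by move=> _; rewrite /= /block !cats0 /= size_cat size_cyc_word; lia.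
Qed.

Definition total_len m := sumn (lens m).

Lemma Lcyc_Pword m j : 0 < j <= m -> Lcyc m j = size (Pword m.-1 (lens m.-1) j).
Proof.
case: m => [|m] /andP [h1 h2]; first lia.
rewrite /Lcyc -[lens m.+1]/[seq size (Pword m (lens m) i) | i <- iota 1 m.+1].
rewrite (nth_map 0) ?size_iota; last lia.
by rewrite nth_iota ?add1n ?(prednK h1) //; lia.
Qed.

Lemma Lcyc_le_total m j : Lcyc m j <= total_len m.
Proof. exact: nth_le_sumn. Qed.

Lemma Lcyc_top m : 1 < m -> Lcyc m m = (m + 1) ^ 2 * total_len m.-1.
Proof.
move=> hm; rewrite Lcyc_Pword; last lia.
case: m hm => [//|m] hm /=.
rewrite Pword_top ?size_nseq; last by apply/eqP; lia.
by rewrite (_ : m + 2 = m.+1 + 1) //; lia.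
Qed.

Lemma total_len_gt0 m : 0 < m -> 0 < total_len m.
Proof.
move=> hm; apply: leq_trans (Lcyc_le_total m 1).
rewrite Lcyc_Pword; last lia.
have [->|m1] := eqVneq m.-1 0; first by [].
by have [rest ->] := @Pword_head m.-1 (lens m.-1) 1 (ltac:(apply/andP; lia)).
Qed.

(* Every cycle of [G_m] is longer than [m]: the last one is, and every [P_{m-1,j}] runs
   twice through the last cycle of [G_{m-1}]. *)
Lemma Lcyc_ge m j : 2 < m -> 0 < j <= m -> m <= Lcyc m j.
Proof.
move=> hm /andP [h1 h2].
have [->|jm] := eqVneq j m.
  by rewrite Lcyc_top; [have := @total_len_gt0 m.-1 (ltac:(lia)); nia | lia].
rewrite Lcyc_Pword; last lia.
have := @size_Pword_ge m.-1 (lens m.-1) j (ltac:(lia)) (ltac:(apply/andP; lia)).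
rewrite -/(Lcyc m.-1 m.-1) Lcyc_top; last lia.
have := @total_len_gt0 m.-1.-1 (ltac:(lia)); nia.
Qed.

Lemma Lcyc_le m j : 1 < j < m -> Lcyc m j <= 2 + 2 * total_len m.-1.
Proof. by move=> hj; rewrite Lcyc_Pword ?size_Pword_le //; lia. Qed.

Lemma edge_cycle_next m j s w : edge m (j, s) w -> 0 < s -> w = cv m j s.+1.
Proof.
case/orP=> [/andP [/eqP [_ ->]]//|].
move=> /hasP [i' _ /hasP [j' _ /andP [/eqP e1 /eqP ->]]].
by move: e1; rewrite /cv; case: ifP => _ [-> ->] //= s0; rewrite s0 in e1.
Qed.

Lemma orbit_along_cycle (xs : nat -> nat -> V) m j s :
  (forall k, Trel (xs k) (xs k.+1)) -> xs 0 m = (j, s) -> 0 < s ->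
  forall t, s + t < Lcyc m j -> xs t m = (j, s + t).
Proof.
move=> hT h0 hs; elim=> [|t IH] ht; first by rewrite addn0.
have := hT t m; rewrite IH; last lia.
move/edge_cycle_next => -> //; last lia.
by rewrite /cv ifF ?addnS //; apply/negbTE/norP; split; apply/eqP; lia.
Qed.

Lemma phi_cycle m j s : 0 < s -> phi m (j, s) = nth center (Pword m (lens m) j) s.
Proof. by move=> hs; rewrite /phi ifF //; apply/eqP => -[_ s0]; rewrite s0 in hs. Qed.

Lemma inX_descend (P : pred V) z m N : inX z ->
  (forall n v, P v -> P (phi n v)) -> N <= m -> P (z m) -> P (z N).
Proof.
move=> hz hP; elim: m => [|m IH] hN hm; first by rewrite (_ : N = 0) //; lia.
have [->//|ne] := eqVneq N m.+1.
by apply: IH; [lia | rewrite -(proj2 (hz m)) hP].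
Qed.

Lemma inX_eq_below z w m N : inX z -> inX w -> N <= m -> z m = w m -> z N = w N.
Proof.
move=> hz hw; elim: m => [|m IH] hN e; first by rewrite (_ : N = 0) //; lia.
have [->//|ne] := eqVneq N m.+1.
by apply: IH; [lia | rewrite -(proj2 (hz m)) -(proj2 (hw m)) e].
Qed.

Lemma inX_center_below z m N : inX z -> N <= m -> z m = center -> z N = center.
Proof.
move=> hz hN /eqP hm; apply/eqP.
by apply: (@inX_descend (pred1 center) z m) => // n v /eqP ->; rewrite /phi eqxx.
Qed.

Lemma phi_deg_ge n j v : 2 <= j -> deg_ge j v -> deg_ge j (phi n v).
Proof.
rewrite /phi; case: eqP => [_|/eqP vc] hj hv; first by rewrite /deg_ge eqxx.
move: hv; rewrite /deg_ge (negbTE vc) /= => jv.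
case: (ltnP v.2 (size (Pword n (lens n) v.1))) => hs; last by rewrite nth_default // eqxx.
have /orP [->//|w_ge] := allP (Pword_deg_ge n (lens n) (leq_trans hj jv)) _ (mem_nth center hs).
by rewrite (leq_trans jv w_ge) orbT.
Qed.

Lemma inX_deg_ge_below z m N j : inX z -> 2 <= j -> N <= m -> deg_ge j (z m) -> deg_ge j (z N).
Proof. by move=> hz hj; apply: inX_descend => // n v; apply: phi_deg_ge. Qed.

(* No vertex of [G_N] has degree larger than [N]. *)
Lemma inX_center_below_deg_gt z m N : inX z -> 0 < N <= m -> deg_ge N.+1 (z m) -> z N = center.
Proof.
move=> hz /andP [h1 h2] /(@inX_deg_ge_below z m N N.+1 hz (ltac:(lia)) h2) /orP [/eqP //|hN].
by have := proj1 (hz N); rewrite /inV => /orP [/eqP //|/andP [/andP [_ hle] _]]; lia.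
Qed.

(* The first [Lcyc m j - 1 >= m - 1] vertices of [P_{m,j}] follow [c_{m,j}], so the
   [(m - N + 1)]-th vertex of [c_{m+1,j}] lies over the first vertex of [c_{N,j}]. *)
Lemma inX_cycle_start_below z m N j : inX z -> 2 < N -> 0 < j <= N -> N <= m ->
  z m = (j, m - N + 1) -> z N = (j, 1).
Proof.
move=> hz hN hj; elim: m => [|m IH] hm e; first lia.
have [eN|ne] := eqVneq N m.+1; first by rewrite eN e eN subnn.
apply: IH; first lia.
rewrite -(proj2 (hz m)) e phi_cycle; last lia.
have [rest ->] := @Pword_head m (lens m) j (ltac:(apply/andP; lia)).
have hg := @Lcyc_ge m j (ltac:(lia)) (ltac:(apply/andP; lia)); rewrite /Lcyc in hg.
rewrite (_ : m.+1 - N + 1 = (m - N + 1).+1) /= ?nth_cat ?size_cyc_word; last lia.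
by rewrite ifT ?nth_cyc_word //; [case: eqP => //; lia | lia | lia].
Qed.

Lemma split_position z m j s s' (A R : seq V) : inX z -> 0 < j -> 0 < s ->
  z m.+1 = (j, s) -> z m = (j, s') ->
  Pword m (lens m) j = A ++ R -> Pword m (lens m) j.+1 = center :: R ->
  s < size A /\ nth center A s = (j, s').
Proof.
move=> hz hj hs e1 e0 eA eR.
have : nth center (A ++ R) s = (j, s') by rewrite -eA -phi_cycle // -e1 (proj2 (hz m)).
rewrite nth_cat; case: ltnP => // hsA e.
have R_deg : all (deg_ge j.+1) (center :: R) by rewrite -eR Pword_deg_ge //; lia.
case: (ltnP (s - size A) (size R)) => h; last by move: e; rewrite nth_default // => -[e' _]; lia.
have /orP [] := allP R_deg _ (mem_nth center (ltac:(rewrite /=; lia) : (s - size A).+1 < size (center :: R))).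
  by rewrite /= e => /eqP [jc]; lia.
by rewrite /= e /=; lia.
Qed.

Lemma level_split z j m s s' : inX z -> 0 < j < m -> 0 < s ->
  z m.+1 = (j, s) -> z m = (j, s') ->
  exists A R, [/\ Pword m (lens m) j = A ++ R, Pword m (lens m) j.+1 = center :: R,
   s < size A, s + (Lcyc m j - s') <= size A &
   (size A - s <= Lcyc m j - s' + 1 \/
    forall s0, 0 < s0 < Lcyc m j ->
      exists2 P, s + (Lcyc m j - s') <= P < size A & nth center A P = (j, s0))]
   /\ (1 < j -> size A = 1 + 2 * Lcyc m j).
Proof.
move=> hz /andP [hj hjm] hs e1 e0.
have [A [R [eA [eR [ends hsize]]]]] := @Pword_split m (lens m) j (ltac:(apply/andP; lia)).
have [hsA hnth] := split_position hz hj hs e1 e0 eA eR.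
have [h1 h2] := ends s s' hsA hnth.
by exists A, R.
Qed.

Lemma cycle_rest_ge z j m s s' : inX z -> 0 < j < m -> 0 < s ->
  z m.+1 = (j, s) -> z m = (j, s') -> m <= Lcyc m.+1 j - s.
Proof.
move=> hz hjm hs e1 e0.
have [A [R [[eA eR hsA _ _] _]]] := level_split hz hjm hs e1 e0.
have := @Lcyc_ge m.+1 j.+1 (ltac:(lia)) (ltac:(apply/andP; lia)).
by rewrite !Lcyc_Pword /= ?eA ?eR ?size_cat /=; lia.
Qed.

Lemma has_deg_on_cycle z j : inX z -> 0 < j -> has_deg z j ->
  exists n0, forall m, n0 <= m -> exists2 s, z m = (j, s) & 0 < s.
Proof.
move=> hz hj [[n0 hn0] hmin]; exists n0 => m hm.
have zm_nc : z m != center.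
  by apply/eqP=> /(inX_center_below hz hm) zc; rewrite /vdeg zc eqxx in hn0.
have hv : vdeg (z m) = Some (z m).1 by rewrite /vdeg (negbTE zm_nc).
have j_le := hmin _ _ hv.
have le_j : (z m).1 <= j.
  case: leqP => // hlt.
  have := @inX_deg_ge_below z m n0 (z m).1 hz (ltac:(lia)) hm.
  rewrite /deg_ge leqnn orbT => /(_ isT).
  by move: hn0; rewrite /vdeg; case: eqP => // _ [->] /=; lia.
have := proj1 (hz m); rewrite /inV (negbTE zm_nc) /= => /andP [_ /andP [s_gt0 _]].
by exists (z m).2 => //; case: (z m) j_le le_j => a b /= *; congr (_, _); lia.
Qed.

Lemma multiple_in_window w d : 0 < d -> exists k, w <= k * d < w + d.
Proof.
move=> hd; elim: w => [|w [k hk]]; first by exists 0; lia.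
by case: (ltnP w (k * d)) => h; [exists k | exists k.+1]; nia.
Qed.

Lemma dist_ge_exp2 (a b : nat -> V) N : a N != b N -> (((2%:R : rat) ^+ N)^-1 <= dist a b)%R.
Proof.
move=> hN; rewrite /dist; case: excluded_middle_informative => [H|]; last by case; exists N.
case: ex_minnP => m _ /(_ _ hN) hm.
by rewrite lef_pV2 ?posrE ?exprn_gt0 // ler_eXn2l // ltr1n.
Qed.

Section NotAsymptotic.
Variables (i n0 N K : nat) (xs ys : nat -> nat -> V).
Hypothesis i_gt0 : 0 < i.
Hypothesis xs_inX : forall k, inX (xs k).
Hypothesis xs_step : forall k, Trel (xs k) (xs k.+1).
Hypothesis ys_inX : forall k, inX (ys k).
Hypothesis ys_step : forall k, Trel (ys k) (ys k.+1).
Hypothesis x_on_cycle : forall m, n0 <= m -> exists2 s, xs 0 m = (i, s) & 0 < s.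
Hypothesis y_on_cycle : forall m, n0 <= m -> exists2 s, ys 0 m = (i.+1, s) & 0 < s.
Hypothesis N_large : n0 + i + 3 <= N.

Lemma ys_deg_ge t : deg_ge i.+1 (ys t N).
Proof.
have [q ey hq] := @y_on_cycle (N + t).+1 (ltac:(lia)).
have [q' ey' _] := @y_on_cycle (N + t) (ltac:(lia)).
have := cycle_rest_ge (ys_inX 0) (ltac:(apply/andP; lia) : 0 < i.+1 < N + t) hq ey ey' => rest.
apply: (@inX_deg_ge_below (ys t) (N + t).+1) => //; try lia.
by rewrite (orbit_along_cycle ys_step ey hq) /deg_ge /=; lia.
Qed.

Hypothesis agree : forall t, K <= t -> xs t N = ys t N.

(* Once [x] sits at the [(m - N + 1)]-th vertex of [c_{m,i}], its [N]-th coordinate is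
   on [c_{N,i}], whereas [y] never comes below degree [i + 1]. *)
Lemma no_cycle_start_ahead m p P (A R : seq V) : N <= m ->
  xs 0 m.+1 = (i, p) -> 0 < p -> Pword m (lens m) i = A ++ R ->
  K <= P - p -> p <= P < size A -> nth center A P = (i, m - N + 1) -> False.
Proof.
move=> hNm ex hp eA hK hP hnth.
have xt : xs (P - p) m.+1 = (i, P).
  rewrite (orbit_along_cycle xs_step ex hp) ?Lcyc_Pword /= ?eA ?size_cat ?subnKC //; lia.
have xt' : xs (P - p) m = (i, m - N + 1).
  by rewrite -(proj2 (xs_inX (P - p) m)) xt phi_cycle ?eA ?nth_cat ?ifT //; lia.
have := @inX_cycle_start_below _ m N i (xs_inX (P - p)) (ltac:(lia)) (ltac:(apply/andP; lia)) hNm xt'.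
rewrite agree // => e; have := ys_deg_ge (P - p).
by rewrite e /deg_ge ltnn orbF xpair_eqE /=; lia.
Qed.

Lemma x_prefix_ends m : N + K + 3 <= m ->
  exists A R p p', [/\ Pword m.+1 (lens m.+1) i = A ++ R,
    Pword m.+1 (lens m.+1) i.+1 = center :: R, xs 0 m.+2 = (i, p), 0 < p & xs 0 m.+1 = (i, p')]
  /\ [/\ m <= Lcyc m.+1 i - p', Lcyc m.+1 i - p' <= size A - p
      & size A - p <= Lcyc m.+1 i - p' + 1].
Proof.
move=> hm.
have [p ex hp] := @x_on_cycle m.+2 (ltac:(lia)).
have [p' ex' hp'] := @x_on_cycle m.+1 (ltac:(lia)).
have [p'' ex'' _] := @x_on_cycle m (ltac:(lia)).
have rest := cycle_rest_ge (xs_inX 0) (ltac:(apply/andP; lia) : 0 < i < m) hp' ex' ex''.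
have [A [R [[eA eR hpA hlow ends] _]]] := level_split (xs_inX 0) (ltac:(apply/andP; lia) : 0 < i < m.+1) hp ex ex'.
case: ends => [hend|repeats].
  by exists A, R, p, p'; split; split=> //; lia.
have Lge := @Lcyc_ge m.+1 i (ltac:(lia)) (ltac:(apply/andP; lia)).
have [P hP hnth] := repeats (m.+1 - N + 1) (ltac:(lia)).
by exfalso; apply: (@no_cycle_start_ahead m.+1 p P A R) ex hp eA _ _ hnth; lia.
Qed.

(* Using the alternative of [ends_or_repeats] at two consecutive levels, the distance of
   [x] to the end of the unshared prefix is at most linear in [total_len], which is
   tiny compared to the length of the last cycle. *)
Lemma x_prefix_tail m : N + K + 3 <= m ->
  exists A R p, [/\ Pword m.+2 (lens m.+2) i = A ++ R,
    Pword m.+2 (lens m.+2) i.+1 = center :: R, xs 0 m.+3 = (i, p) & 0 < p]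
  /\ K < size A - p <= 3 * total_len m.+1 + 3.
Proof.
move=> hm.
have [A [R [p [p' [[eA eR ex hp ex'] hA]]]]] := @x_prefix_ends m.+1 (ltac:(lia)).
have [A' [R' [p2 [pb [[eA' eR' ex2 _ _] hA']]]]] := @x_prefix_ends m (ltac:(lia)).
have ep : p2 = p' by move: ex2; rewrite ex' => -[].
subst p2.
have LA' : Lcyc m.+2 i = size A' + size R' by rewrite Lcyc_Pword /= ?eA' ?size_cat //; lia.
have LR' : size R' + 1 = Lcyc m.+2 i.+1 by rewrite Lcyc_Pword /= ?eR' ?addn1 //; lia.
have := @Lcyc_le m.+2 i.+1 (ltac:(lia)); rewrite /= => LR'_le.
have := Lcyc_le_total m.+1 i.
case: hA hA' => h1 h2 h3 [h4 h5 h6] LA'_le.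
by exists A, R, p; split; [split | lia].
Qed.

Lemma y_before_tail M : N + 1 < M ->
  exists X q, [/\ Pword M (lens M) i.+1 = X ++ cyc_word2 (lens M) M ++ [:: center],
    ys 0 M.+1 = (i.+1, q), 0 < q, q < size X & q <= 1 + 2 * Lcyc M i.+1].
Proof.
move=> hM.
have [q ey hq] := @y_on_cycle M.+1 (ltac:(lia)).
have [q' ey' _] := @y_on_cycle M (ltac:(lia)).
have [A [R [[eA _ hqA _ _] hsize]]] := level_split (ys_inX 0) (ltac:(apply/andP; lia) : 0 < i.+1 < M) hq ey ey'.
have [X eX] := @Pword_tail M (lens M) i.+1 (ltac:(lia)) (ltac:(apply/andP; lia)).
exists X, q; split=> //; last by rewrite -hsize; lia.
have : nth center (Pword M (lens M) i.+1) q = (i.+1, q').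
  by rewrite -phi_cycle // -ey (proj2 (ys_inX 0 M)).
rewrite eX nth_cat; case: ltnP => // hXq.
case: (ltnP (q - size X) (size (cyc_word2 (lens M) M ++ [:: center]))) => hW.
  move=> e; have := allP (cyc_word2_center_on (lens M) M) _ (mem_nth center hW).
  by rewrite e /on_cycle /=; lia.
by rewrite nth_default.
Qed.

(* [P_{M,i}] and [P_{M,i+1}] share their suffix [R], so [y] at time [t] and [x] at time
   [t + d] lie over the same vertex of [R] as long as [y] has not left [c_{M+1,i+1}]; this
   makes [t |-> y_N(t)] [d]-periodic until [y] reaches the final [2 c_{M,M} + e_{M,0}]
   of [P_{M,i+1}], where its [N]-th coordinate is the base vertex. *)
Lemma tail_window_center M p q (A R X W : seq V) : N < M ->
  xs 0 M.+1 = (i, p) -> 0 < p -> ys 0 M.+1 = (i.+1, q) -> 0 < q ->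
  Pword M (lens M) i = A ++ R -> Pword M (lens M) i.+1 = center :: R ->
  Pword M (lens M) i.+1 = X ++ W -> all (on_cycle M) W ->
  K < size A - p -> q < size X -> size A - p + q <= size W ->
  ys 0 N = center.
Proof.
move=> hNM ex hp ey hq eA eR eXW hW hK hqX hdW.
move def_d : (size A - p + q - 1) => d.
have Lx : Lcyc M.+1 i = size A + size R by rewrite Lcyc_Pword /= ?eA ?size_cat //; lia.
have Ly : Lcyc M.+1 i.+1 = size R + 1 by rewrite Lcyc_Pword /= ?eR ?addn1 //; lia.
have hXW : size X + size W = size R + 1 by rewrite -size_cat -eXW eR /= addn1.
have y_at t : q + t < size X + size W -> ys t M.+1 = (i.+1, q + t).
  by move=> ht; apply: orbit_along_cycle => //; lia.
have periodic t : t < size X + size W - q -> ys t N = ys (t + d) N.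
  move=> ht; rewrite -[ys (t + d) N]agree; last lia.
  apply: (inX_eq_below (ys_inX t) (xs_inX (t + d)) (ltac:(lia) : N <= M)).
  rewrite -(proj2 (ys_inX t M)) -(proj2 (xs_inX (t + d) M)) y_at; last lia.
  rewrite (orbit_along_cycle xs_step ex hp); last lia.
  rewrite !phi_cycle ?eR ?eA; try lia.
  rewrite nth_cat ifF; last lia.
  by rewrite (_ : q + t = (q + t - 1).+1) /=; [congr nth | ]; lia.
have iterate k : k * d < size X - q + d -> ys (k * d) N = ys 0 N.
  elim: k => [//|k IH] hk.
  by rewrite mulSn addnC -periodic ?IH //; nia.
have window t : size X <= q + t < size X + size W -> ys t N = center.
  move=> ht; apply: (inX_center_below_deg_gt (ys_inX t) (ltac:(apply/andP; lia) : 0 < N <= M)).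
  rewrite -(proj2 (ys_inX t M)) y_at ?phi_cycle ?eXW ?nth_cat ?ifF; try lia.
  have /orP [/eqP -> //|/eqP hM] := allP hW _ (mem_nth center (ltac:(lia) : q + t - size X < size W)).
  by rewrite /deg_ge hM hNM orbT.
have [k hk] := @multiple_in_window (size X - q) d (ltac:(lia)).
by rewrite -(iterate k) ?window //; lia.
Qed.

Lemma not_eventually_equal_coord : False.
Proof.
pose m := N + K + 3.
have [A [R [p [[eA eR ex hp] /andP [hK hA]]]]] := @x_prefix_tail m (leqnn _).
have [X [q [eX ey hq hqX hqL]]] := @y_before_tail m.+2 (ltac:(lia)).
have [q0 ey0 _] := @y_on_cycle N (ltac:(lia)).
suff hW : size A - p + q <= size (cyc_word2 (lens m.+2) m.+2 ++ [:: center]).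
  have := @tail_window_center m.+2 p q A R X _ (ltac:(lia)) ex hp ey hq eA eR eX
    (cyc_word2_center_on _ _) hK hqX hW.
  by rewrite ey0.
rewrite size_cat size_cyc_word2 -/(Lcyc m.+2 m.+2) Lcyc_top //=.
have := @Lcyc_le m.+2 i.+1 (ltac:(lia)); rewrite /= => Lle.
have T_gt0 := @total_len_gt0 m.+1 (ltac:(lia)).
have sq : 3 ^ 2 * total_len m.+1 <= (m.+2 + 1) ^ 2 * total_len m.+1.
  by rewrite leq_mul2r leq_exp2r //; lia.
lia.
Qed.

End NotAsymptotic.

Theorem lemma3p11 (x y : nat -> V) (i : nat) :
  (0 < i)%N -> inX x -> inX y -> has_deg x i -> has_deg y i.+1 ->
  forall xs ys : nat -> nat -> V, is_orbit x xs -> is_orbit y ys ->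
  exists eps : rat, (0 < eps)%R /\
    forall N : nat, exists n : nat, (N <= n)%N /\ (eps <= dist (xs n) (ys n))%R.
Proof.
move=> i_gt0 hX hY hdx hdy xs ys [xs0 hxs] [ys0 hys].
have [nx x_cyc] := has_deg_on_cycle hX i_gt0 hdx.
have [ny y_cyc] := has_deg_on_cycle hY (ltn0Sn i) hdy.
pose N := nx + ny + i + 3.
exists ((2%:R ^+ N)^-1)%R; split; first by rewrite invr_gt0 exprn_gt0.
move=> K; case: (classic (exists2 n, K <= n & xs n N != ys n N)) => [[n hKn hne]|agree].
  by exists n; split=> //; apply: dist_ge_exp2.
exfalso; apply: (@not_eventually_equal_coord i (nx + ny) N K xs ys) => //.
- by move=> k; case: (hxs k).
- by move=> k; case: (hxs k).
- by move=> k; case: (hys k).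
- by move=> k; case: (hys k).
- by move=> m hm; rewrite xs0; apply: x_cyc; lia.
- by move=> m hm; rewrite ys0; apply: y_cyc; lia.
- by move=> t ht; apply/eqP/negPn/negP => hne; apply: agree; exists t.
Qed.
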